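(* A regular Hausdorff space $X$ is a Nagata space if and only if $\mathcal{F}(X)$ is a Nagata space.
   Context: $\mathcal{F}(X)$ is the set of nonempty finite subsets of $X$ with the Vietoris topology (base: $\langle U_1,\dots,U_k\rangle=\{A: A\subset\bigcup_i U_i,\ A\cap U_j\neq\emptyset\ \forall j\}$, $U_i$ open in $X$). A space $Y$ is a Nagata space if for each $x\in Y$ there are sequences $\{U_n(x)\}_{n\in\mathbb{N}}$ and $\{V_n(x)\}_{n\in\mathbb{N}}$ of open neighborhoods of $x$ such that (i) $\{U_n(x)\}$ is a local base at $x$ with $U_{n+1}(x)\subset U_n(x)$, and (ii) if $y\notin U_n(x)$ then $V_n(x)\cap V_n(y)=\emptyset$. *)

From HB Require Import structures.
From mathcomp Require Import all_boot all_order all_algebra.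
From mathcomp Require Import all_classical all_reals all_analysis.
Set Implicit Arguments. Unset Strict Implicit. Unset Printing Implicit Defensive.
Local Open Scope classical_set_scope.

Definition nagata_wrt (Y : Type) (op : set Y -> Prop) : Prop :=
  exists (U V : Y -> nat -> set Y), forall x : Y,
    [/\ (forall n, op (U x n) /\ U x n x),
        (forall n, op (V x n) /\ V x n x),
        (forall W, op W -> W x -> exists n, U x n `<=` W),
        (forall n, U x n.+1 `<=` U x n) &
        (forall n y, ~ U x n y -> V x n `&` V y n = set0)].

Definition nagata_space (X : topologicalType) : Prop :=
  nagata_wrt (@open X).

Definition finsubsets (X : Type) : Type :=
  {A : set X | finite_set A /\ A !=set0}.

Definition vietoris_basic (X : topologicalType) (Us : seq (set X))
  : set (finsubsets X) :=
  fun A => (proj1_sig A `<=` (fun x => exists2 U, U \in Us & U x)) /\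
           (forall U, U \in Us -> proj1_sig A `&` U !=set0).

Definition vietoris_open (X : topologicalType) (W : set (finsubsets X)) : Prop :=
  forall A, W A -> exists Us : seq (set X),
    [/\ (forall U, U \in Us -> open U), vietoris_basic Us A &
        vietoris_basic Us `<=` W].

From mathcomp Require Import all_boot all_order all_algebra.
From mathcomp Require Import all_classical all_reals all_analysis.

(* If (U_n, V_n) witness that X is a Nagata space, then the Vietoris sets
   U_n(A) = <U_n(a) : a in A> and V_n(A) = <V_n(a) : a in A> witness it for
   F(X).  A basic neighbourhood <W_1, ..., W_k> of A contains U_n(A) as soon as
   U_n(a) is inside W_j whenever a is in W_j, which holds for all large n since
   only finitely many pairs (a, W_j) occur.  If B is not in U_n(A), there are
   a in A and b in B with b not in U_n(a), and then the disjoint sets V_n(a),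
   V_n(b) keep every element of V_n(A) away from V_n(B).  Conversely x |-> {x}
   induces the topology of X on its image in F(X), and the Nagata property
   passes to such subspaces. *)

Set Implicit Arguments. Unset Strict Implicit. Unset Printing Implicit Defensive.
Local Open Scope classical_set_scope.

Lemma near_forall_finite (T : Type) (I : choiceType) (D : set I)
    (F : set_system T) (P : I -> T -> Prop) :
  Filter F -> finite_set D -> (forall i, D i -> \forall x \near F, P i x) ->
  \forall x \near F, forall i, D i -> P i x.
Proof.
move=> FF /finite_fsetP[D' ->] FP.
by apply: filterS (filter_bigI (f := P) FF FP) => x DP i /DP.
Qed.

Lemma nested_subset (T : Type) (U : nat -> set T) :
  (forall n, U n.+1 `<=` U n) -> forall n m, (n <= m)%N -> U m `<=` U n.
Proof.
move=> decrU n m /subnK <-; elim: (m - n)%N => //= k IH.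
by rewrite addSn; apply: subset_trans (decrU _) IH.
Qed.

Lemma nested_base_near (T : Type) (U : nat -> set T) (W : set T) n0 :
  (forall n, U n.+1 `<=` U n) -> U n0 `<=` W -> \forall n \near \oo, U n `<=` W.
Proof.
move=> decrU sUW; apply: filterS (nbhs_infty_ge n0) => n n0n.
exact: subset_trans (nested_subset decrU n0n) sUW.
Qed.

Lemma nagata_space_initial (X : topologicalType) (Y : Type)
    (opY : set Y -> Prop) (f : X -> Y) :
  (forall W, opY W -> open (f @^-1` W)) ->
  (forall W x, open W -> W x ->
     exists2 W', opY W' & W' (f x) /\ f @^-1` W' `<=` W) ->
  nagata_wrt opY -> nagata_space X.
Proof.
move=> contf initf [U [V nagataUV]].
exists (fun x n => f @^-1` U (f x) n), (fun x n => f @^-1` V (f x) n) => x.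
have [oU oV baseU decrU sepUV] := nagataUV (f x).
split=> [n|n|W oW Wx|n y /decrU //|n y /sepUV sepxy].
- by have [oUn Ux] := oU n; split; first exact: contf.
- by have [oVn Vx] := oV n; split; first exact: contf.
- have [W' oW' [W'fx sW'W]] := initf W x oW Wx.
  have [n sUW'] := baseU W' oW' W'fx.
  by exists n => y /sUW' W'fy; apply: sW'W.
- by rewrite -preimage_setI sepxy preimage_set0.
Qed.

Section Vietoris.
Variable X : topologicalType.

Lemma vietoris_open_basic (Us : seq (set X)) :
  (forall U, U \in Us -> open U) -> vietoris_open (vietoris_basic Us).
Proof. by move=> oUs A UsA; exists Us; split. Qed.

Definition finsubset_seq (A : finsubsets X) : seq X :=
  projT1 (cid (iffLR (finite_seqP _) (proj1 (proj2_sig A)))).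

Lemma mem_finsubset_seq (A : finsubsets X) a :
  a \in finsubset_seq A <-> proj1_sig A a.
Proof. by rewrite /finsubset_seq; case: cid => s /= ->. Qed.

Definition vietoris_lift (W : X -> nat -> set X) (A : finsubsets X) n :=
  vietoris_basic [seq W a n | a <- finsubset_seq A].

Lemma vietoris_liftP W A n B :
  vietoris_lift W A n B <->
  (forall b, proj1_sig B b -> exists2 a, proj1_sig A a & W a n b) /\
  (forall a, proj1_sig A a -> exists2 b, proj1_sig B b & W a n b).
Proof.
split=> [[coverB meetB] | [coverB meetB]]; split.
- move=> b Bb; have [_ /mapP[a /mem_finsubset_seq Aa ->] Wab] := coverB b Bb.
  by exists a.
- move=> a /mem_finsubset_seq Aa.
  by have [b [Bb Wab]] := meetB _ (map_f (W^~ n) Aa); exists b.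
- move=> b Bb; have [a Aa Wab] := coverB b Bb.
  by exists (W a n) => //; apply/map_f/mem_finsubset_seq.
- move=> _ /mapP[a /mem_finsubset_seq Aa ->].
  by have [b Bb Wab] := meetB a Aa; exists b.
Qed.

Lemma vietoris_lift_open W A n :
  (forall a, open (W a n)) -> vietoris_open (vietoris_lift W A n).
Proof. by move=> oW; apply: vietoris_open_basic => _ /mapP[a _ ->]. Qed.

Lemma vietoris_lift_self W A n : (forall a, W a n a) -> vietoris_lift W A n A.
Proof. by move=> Waa; apply/vietoris_liftP; split=> a Aa; exists a. Qed.

Lemma vietoris_lift_decr W A n :
  (forall a, W a n.+1 `<=` W a n) -> vietoris_lift W A n.+1 `<=` vietoris_lift W A n.
Proof.
move=> decrW B /vietoris_liftP[coverB meetB]; apply/vietoris_liftP; split.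
- by move=> b /coverB[a Aa /decrW Wab]; exists a.
- by move=> a /meetB[b Bb /decrW Wab]; exists b.
Qed.

Lemma vietoris_lift_local_base (U : X -> nat -> set X) A W :
  (forall x n, U x n.+1 `<=` U x n) ->
  (forall x W, open W -> W x -> exists n, U x n `<=` W) ->
  vietoris_open W -> W A -> exists n, vietoris_lift U A n `<=` W.
Proof.
move=> decrU baseU oW WA; have [Us [oUs [coverA meetA] sUsW]] := oW A WA.
have : \forall n \near \oo, forall a, proj1_sig A a ->
    forall W0, [set` Us] W0 -> W0 a -> U a n `<=` W0.
  apply: near_forall_finite (proj1 (proj2_sig A)) _ => a _.
  apply: near_forall_finite (finite_seq Us) _ => W0 /oUs oW0.
  have [W0a | nW0a] := pselect (W0 a); last by apply: nearW.
  have [n0 sUW0] := baseU a W0 oW0 W0a.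
  by apply: filterS (nested_base_near (decrU a) sUW0) => n sUnW0 _.
move=> /filter_ex[n sUUs]; exists n => B /vietoris_liftP[coverB meetB].
apply: sUsW; split.
- move=> b /coverB[a Aa Uab]; have [W0 Us_W0 W0a] := coverA a Aa.
  by exists W0 => //; apply: sUUs Aa W0 Us_W0 W0a b Uab.
- move=> W0 Us_W0; have [a [Aa W0a]] := meetA W0 Us_W0.
  have [b Bb Uab] := meetB a Aa.
  by exists b; split => //; apply: sUUs Aa W0 Us_W0 W0a b Uab.
Qed.

Lemma vietoris_lift_separate (U V : X -> nat -> set X) A B n :
  (forall x y, ~ U x n y -> V x n `&` V y n = set0) ->
  ~ vietoris_lift U A n B -> vietoris_lift V A n `&` vietoris_lift V B n = set0.
Proof.
move=> sepUV nUAB; rewrite -subset0 => C [/vietoris_liftP[coverA meetA]].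
move=> /vietoris_liftP[coverB meetB].
have disjV a b c : ~ U a n b -> V a n c -> V b n c -> False.
  by move=> /sepUV disjab Vac Vbc; have : (V a n `&` V b n) c by []; rewrite disjab.
apply: nUAB; apply/vietoris_liftP; split => [b Bb | a Aa]; apply: contrapT.
- move=> nUb; have [c Cc Vbc] := meetB b Bb; have [a Aa Vac] := coverA c Cc.
  by apply: (disjV a b c) => // Uab; apply: nUb; exists a.
- move=> nUa; have [c Cc Vac] := meetA a Aa; have [b Bb Vbc] := coverB c Cc.
  by apply: (disjV a b c) => // Uab; apply: nUa; exists b.
Qed.

Lemma nagata_vietoris : nagata_space X -> nagata_wrt (@vietoris_open X).
Proof.
move=> [U [V nagataUV]].
have oU x : forall n, open (U x n) /\ U x n x by have [] := nagataUV x.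
have oV x : forall n, open (V x n) /\ V x n x by have [] := nagataUV x.
have baseU x : forall W, open W -> W x -> exists n, U x n `<=` W.
  by have [] := nagataUV x.
have decrU x : forall n, U x n.+1 `<=` U x n by have [] := nagataUV x.
have sepUV x : forall n y, ~ U x n y -> V x n `&` V y n = set0.
  by have [] := nagataUV x.
exists (vietoris_lift U), (vietoris_lift V) => A; split=> [n|n|W|n|n B].
- split; first by apply: vietoris_lift_open => a; case: (oU a n).
  by apply: vietoris_lift_self => a; case: (oU a n).
- split; first by apply: vietoris_lift_open => a; case: (oV a n).
  by apply: vietoris_lift_self => a; case: (oV a n).
- exact: vietoris_lift_local_base.
- exact: vietoris_lift_decr.
- by apply: vietoris_lift_separate => x y; apply: sepUV.
Qed.

Definition finsubset1 (x : X) : finsubsets X :=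
  exist _ [set x] (conj (finite_set1 x) (ex_intro _ x erefl)).

Lemma open_finsubset1_preimage W : vietoris_open W -> open (finsubset1 @^-1` W).
Proof.
move=> oW; rewrite openE => y Wy.
have [Us [oUs [coverY meetY] sUsW]] := oW _ Wy.
have [U0 Us_U0 U0y] := coverY y erefl.
have : \forall z \near y, forall W0, [set` Us] W0 -> W0 z.
  apply: near_forall_finite (finite_seq Us) _ => W0 Us_W0.
  have [_ [/= -> W0y]] := meetY W0 Us_W0.
  by apply: open_nbhs_nbhs; split; [apply: oUs|].
apply: filterS => z Us_z; apply: sUsW; split.
- by move=> _ /= ->; exists U0 => //; apply: Us_z.
- by move=> W0 Us_W0; exists z; split => //; apply: Us_z.
Qed.

Lemma vietoris_basic1_finsubset1 (W : set X) y :
  vietoris_basic [:: W] (finsubset1 y) <-> W y.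
Proof.
split=> [[coverY _] | Wy].
- have [U0 + U0y] := coverY y erefl.
  by rewrite mem_seq1 => /eqP <-.
- split=> [_ /= -> | U0]; first by exists W; rewrite ?mem_head.
  by rewrite mem_seq1 => /eqP ->; exists y.
Qed.

Lemma vietoris_nagata : nagata_wrt (@vietoris_open X) -> nagata_space X.
Proof.
apply: nagata_space_initial; first exact: open_finsubset1_preimage.
move=> W x oW Wx; exists (vietoris_basic [:: W]).
  by apply: vietoris_open_basic => U0; rewrite mem_seq1 => /eqP ->.
by split=> [|y /vietoris_basic1_finsubset1 //]; apply/vietoris_basic1_finsubset1.
Qed.

End Vietoris.

Theorem theorem4p5 (X : topologicalType) :
  hausdorff_space X -> regular_space X ->
  (nagata_space X <-> nagata_wrt (@vietoris_open X)).
Proof.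
(* Nagata spaces as defined here need no separation axiom. *)
by move=> _ _; split; [apply: nagata_vietoris | apply: vietoris_nagata].
Qed.
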